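(* Let $X\subseteq W$ be a block subspace, $(y_0,y_1,y_2,\dots)$ a block sequence in $W$, $\alpha<\omega_1$ and $K\ge1$. Assume that II has a strategy in $F^{\omega\cdot\alpha}_X$ to play $(x_0,\dots,x_k)$ such that $(x_0,\dots,x_k)\sim_K(y_0,\dots,y_k)$. Then for every block sequence $(z_n)$ in $[y_n]$, II has a strategy in $F^\alpha_X$ to play $(v_0,\dots,v_k)$ such that $(v_0,\dots,v_k)\sim_K(z_0,\dots,z_k)$.
   Context: Let $\mathcal W$ be a real Banach space with Schauder basis $(e_n)$. Fix a countable subfield $\mathfrak F\subseteq\mathbb R$ such that $\|\sum_{n\le m}a_ne_n\|\in\mathfrak F$ whenever all $a_n\in\mathfrak F$, and let $W$ be the $\mathfrak F$-vector space of finite $\mathfrak F$-linear combinations of the $e_n$, with the norm of $\mathcal W$; subspaces and spans $[\cdot]$ are $\mathfrak F$-linear in $W$. For nonzero $x=\sum a_ne_n$, ${\rm supp}(x)=\{n:a_n\neq0\}$, and $x<y$ means $\max{\rm supp}(x)<\min{\rm supp}(y)$. A block sequence is a sequence of nonzero vectors $x_0<x_1<\dots$; a block subspace is the span of an infinite block sequence. $[e_i]_{i>n}$ is the span of $\{e_i:i>n\}$. $(x_i)_{i\le k}\sim_K(y_i)_{i\le k}$ means $\frac1K\|\sum a_ix_i\|\le\|\sum a_iy_i\|\le K\|\sum a_ix_i\|$ for all real $a_i$. $\omega\cdot\alpha$ is ordinal multiplication. Game $F^\gamma_X$ ($\gamma$ countable ordinal): in rounds $l=0,1,\dots$, I plays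 an integer $n_l$ and an ordinal $\xi_l$ ($\xi_0<\gamma$, $\xi_l<\xi_{l-1}$); II responds with a finite-dimensional $F_l\subseteq X\cap[e_i]_{i>n_l}$ and a nonzero $x_l\in F_0+\dots+F_l$; it ends after II's response to $\xi_k=0$ (immediately if $\gamma=0$), with outcome $(x_0,\dots,x_k)$. ''II has a strategy to play ... such that P'' means II can ensure the outcome satisfies P. *)

From HB Require Import structures.
From mathcomp Require Import all_boot all_order all_algebra.
From mathcomp Require Import all_classical all_reals all_analysis.
Set Implicit Arguments. Unset Strict Implicit. Unset Printing Implicit Defensive.
Import Order.TTheory GRing.Theory Num.Theory.
Import numFieldNormedType.Exports.
Local Open Scope classical_set_scope.
Local Open Scope ring_scope.

Section Defs.
Variables (R : realType) (V : completeNormedModType R).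

Definition expansion (e : nat -> V) (a : nat -> R) (x : V) : Prop :=
  (fun m : nat => \sum_(i < m) a i *: e i) @ \oo --> x.

Definition schauder_basis (e : nat -> V) : Prop :=
  forall x : V, exists! a : nat -> R, expansion e a x.

Definition is_subfield (F : set R) : Prop :=
  [/\ F 0, F 1, (forall a b, F a -> F b -> F (a + b)),
      (forall a, F a -> F (- a)) &
      (forall a b, F a -> F b -> F (a * b))] /\
  (forall a, F a -> a != 0 -> F a^-1).

Definition norm_in_field (F : set R) (e : nat -> V) : Prop :=
  forall (m : nat) (a : nat -> R), (forall n, F (a n)) ->
    F `|\sum_(n < m.+1) a n *: e n|.

Definition spanF (F : set R) (S : set V) : set V :=
  [set v | exists (k : nat) (c : nat -> R) (s : nat -> V),
     (forall i, (i < k)%N -> F (c i) /\ S (s i)) /\ v = \sum_(i < k) c i *: s i].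

Definition in_W (F : set R) (e : nat -> V) (x : V) : Prop := spanF F (range e) x.

Definition in_supp (e : nat -> V) (x : V) (n : nat) : Prop :=
  exists a, expansion e a x /\ a n != 0.

Definition block_lt (e : nat -> V) (x y : V) : Prop :=
  forall i j, in_supp e x i -> in_supp e y j -> (i < j)%N.

Definition block_seq (F : set R) (e : nat -> V) (x : nat -> V) : Prop :=
  forall n, [/\ x n != 0, in_W F e (x n) & block_lt e (x n) (x n.+1)].

Definition equivK (K : R) (xs ys : seq V) : Prop :=
  size xs = size ys /\
  forall a : nat -> R,
    K^-1 * `|\sum_(i < size xs) a i *: xs`_i| <= `|\sum_(i < size ys) a i *: ys`_i|
    /\ `|\sum_(i < size ys) a i *: ys`_i| <= K * `|\sum_(i < size xs) a i *: xs`_i|.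

(** Countable ordinals are represented by countable strict well-orders. *)
Definition countable_wellorder (T : Type) (lt : T -> T -> Prop) : Prop :=
  [/\ (forall x, ~ lt x x), (forall x y z, lt x y -> lt y z -> lt x z),
      (forall x y, x = y \/ lt x y \/ lt y x), well_founded lt
    & exists f : T -> nat, injective f].

(** order type omega * alpha : alpha copies of omega, ordered lexicographically
    with the alpha-component most significant *)
Definition omega_mul_lt (T : Type) (lt : T -> T -> Prop) (p q : T * nat) : Prop :=
  lt p.1 q.1 \/ (p.1 = q.1 /\ (p.2 < q.2)%N).

Definition is_zero (T : Type) (lt : T -> T -> Prop) (xi : T) : Prop :=
  forall eta, ~ lt eta xi.

(** a complete sequence of moves (n_0,xi_0),...,(n_k,xi_k) of player I in F^gamma:
    strictly decreasing ordinals, the game ends exactly when xi_k = 0 *)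
Definition complete_play (T : Type) (lt : T -> T -> Prop) (ms : seq (nat * T)) : Prop :=
  (forall ms1 p q ms2, ms = ms1 ++ p :: q :: ms2 -> lt q.2 p.2 /\ ~ is_zero lt p.2)
  /\ exists ms1 p, ms = rcons ms1 p /\ is_zero lt p.2.

(** A strategy for II maps the moves of I so far to II's answer
    (a finite list of generators of F_l, the vector x_l). *)
Definition strategyII (T : Type) := seq (nat * T) -> seq V * V.

Definition outcome (T : Type) (sigma : strategyII T) (ms : seq (nat * T)) : seq V :=
  [seq (sigma (take i.+1 ms)).2 | i <- iota 0 (size ms)].

Definition legalII (F : set R) (e : nat -> V) (X : set V) (T : Type)
    (sigma : strategyII T) (ms : seq (nat * T)) : Prop :=
  forall ms1 p ms2, ms = ms1 ++ p :: ms2 ->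
    let j := size ms1 in
    let r := sigma (take j.+1 ms) in
    [/\ spanF F [set g | g \in r.1] `<=` X `&` spanF F [set e i | i in [set i | (p.1 < i)%N]],
        r.2 != 0
      & spanF F [set g | g \in flatten [seq (sigma (take i.+1 ms)).1 | i <- iota 0 j.+1]] r.2].

Definition II_has_strategy (F : set R) (e : nat -> V) (X : set V) (T : Type)
    (lt : T -> T -> Prop) (P : seq V -> Prop) : Prop :=
  exists sigma : strategyII T,
    (~ inhabited T -> P [::]) /\
    forall ms, complete_play lt ms -> legalII F e X sigma ms /\ P (outcome sigma ms).

End Defs.

From HB Require Import structures.
From mathcomp Require Import all_boot all_order all_algebra.
From mathcomp Require Import all_classical all_reals all_analysis.
From mathcomp Require Import zify.
Set Implicit Arguments. Unset Strict Implicit. Unset Printing Implicit Defensive.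
Import Order.TTheory GRing.Theory Num.Theory.
Import numFieldNormedType.Exports.
Local Open Scope classical_set_scope.
Local Open Scope ring_scope.

(* A move (n, xi) of I in F^alpha is simulated by a block of d moves
   (n, omega * xi + m), m = d - 1, ..., 0, of I in F^(omega * alpha), in which II
   follows the given strategy and produces x_0, x_1, ...  Write
   z_l = sum_i c_(l,i) y_(s(l,i)) with coefficients in the field, and make the block
   of round l long enough that every index s(l,i) has been played by its end; II then
   answers round l with all the spaces of that block and with
   v_l = sum_i c_(l,i) x_(s(l,i)).  The same linear map sends (x_j) to (v_l) and (y_j)
   to (z_l), so K-equivalence passes from the former pair to the latter, and v_l != 0
   because z_l != 0.  Neither the basis, nor the block structure of (z_n), nor the
   well-foundedness of the ordinals plays any role. *)

Section Blocks.
Variable d : nat -> nat.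
Hypothesis d_gt0 : forall l, (0 < d l)%N.

Definition block_start l := (\sum_(m < l) d m)%N.

Lemma block_start0 : block_start 0 = 0%N.
Proof. by rewrite /block_start big_ord0. Qed.

Lemma block_startS l : block_start l.+1 = (block_start l + d l)%N.
Proof. by rewrite /block_start big_ord_recr. Qed.

Lemma leq_block_start m n : (m <= n)%N -> (block_start m <= block_start n)%N.
Proof.
move=> /subnK <-; elim: (n - m)%N => [|k IH]; first by rewrite add0n.
by rewrite addSn block_startS; lia.
Qed.

Lemma leq_block_start_id l : (l <= block_start l)%N.
Proof.
elim: l => [|l IH] //; rewrite block_startS; have := d_gt0 l; lia.
Qed.

Definition block_of j := find (fun l => (j < block_start l.+1)%N) (iota 0 j.+1).

Lemma block_ofP j : (block_start (block_of j) <= j < block_start (block_of j).+1)%N.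
Proof.
have has_block : has (fun l => (j < block_start l.+1)%N) (iota 0 j.+1).
  apply/hasP; exists j; first by rewrite mem_iota; lia.
  by have := leq_block_start_id j.+1; lia.
have lt_block : (block_of j < j.+1)%N.
  by rewrite /block_of -[X in (_ < X)%N](size_iota 0 j.+1) -has_find.
have := nth_find 0%N has_block; rewrite -/(block_of j) nth_iota // add0n => ->.
rewrite andbT; case E: (block_of j) => [|r]; first by rewrite block_start0.
have := before_find 0%N (_ : (r < block_of j)%N); rewrite E => /(_ (ltnSn r)).
by rewrite nth_iota ?add0n; lia.
Qed.

Lemma block_ofE j l : (block_start l <= j < block_start l.+1)%N -> block_of j = l.
Proof.
move=> hl; have hj := block_ofP j.
by case: (ltngtP (block_of j) l) => // /leq_block_start; lia.
Qed.

Lemma block_of_lt j L : (j < block_start L)%N -> (block_of j < L)%N.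
Proof.
move=> hj; have := block_ofP j; case: (leqP L (block_of j)) => // /leq_block_start.
lia.
Qed.

End Blocks.

Lemma cons2_catP (A : Type) (a0 : A) (Q : A -> A -> Prop) (s : seq A) :
  (forall s1 p q s2, s = s1 ++ p :: q :: s2 -> Q p q) <->
  (forall i, (i.+1 < size s)%N -> Q (nth a0 s i) (nth a0 s i.+1)).
Proof.
split=> [H i hi | H s1 p q s2 E].
  apply: (H (take i s) _ _ (drop i.+2 s)).
  by rewrite -{1}(cat_take_drop i s) (drop_nth a0) ?(drop_nth a0 (n := i.+1)) //; lia.
have := H (size s1); rewrite E size_cat /= !nth_cat ltnn subnn.
by rewrite ifN ?subSnn /=; [apply; lia | lia].
Qed.

Lemma cons_catP (A : Type) (a0 : A) (Q : nat -> A -> Prop) (s : seq A) :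
  (forall s1 p s2, s = s1 ++ p :: s2 -> Q (size s1) p) <->
  (forall j, (j < size s)%N -> Q j (nth a0 s j)).
Proof.
split=> [H j hj | H s1 p s2 E].
  have := H (take j s) (nth a0 s j) (drop j.+1 s); rewrite size_takel; last lia.
  by apply; rewrite -{1}(cat_take_drop j s) (drop_nth a0).
by have := H (size s1); rewrite E nth_cat ltnn subnn size_cat /=; apply; lia.
Qed.

Lemma rconsP (A : Type) (a0 : A) (Z : A -> Prop) (s : seq A) :
  (exists s1 p, s = rcons s1 p /\ Z p) <-> ((0 < size s)%N /\ Z (last a0 s)).
Proof.
split=> [[s1 [p [-> hp]]] | ]; first by rewrite last_rcons size_rcons.
by case/lastP: s => [[]|s1 x] //; rewrite last_rcons => -[_ h]; exists s1, x.
Qed.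

Section SpanF.
Variables (R : realType) (V : completeNormedModType R) (F : set R).

Lemma spanF_range (y : nat -> V) v : spanF F (range y) v ->
  exists k (c : nat -> R) (s : nat -> nat),
    (forall i, (i < k)%N -> F (c i)) /\ v = \sum_(i < k) c i *: y (s i).
Proof.
move=> [k [c [w [hw ->]]]].
have /choice [s hs] : forall i, exists m, (i < k)%N -> y m = w i.
  move=> i; case: (ltnP i k) => hi; last by exists 0%N; lia.
  by have [_ [m _ hm]] := hw i hi; exists m.
exists k, c, s; split=> [i /hw [] //|]; apply: eq_bigr => i _; by rewrite hs.
Qed.

Lemma spanF_range_seq (y z : nat -> V) : (forall n, spanF F (range y) (z n)) ->
  exists (k : nat -> nat) (c : nat -> nat -> R) (s : nat -> nat -> nat),
    (forall n i, (i < k n)%N -> F (c n i)) /\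
    forall n, z n = \sum_(i < k n) c n i *: y (s n i).
Proof.
move=> hz; have /choice [t ht] : forall n, exists t : nat * (nat -> R) * (nat -> nat),
    (forall i, (i < t.1.1)%N -> F (t.1.2 i)) /\ z n = \sum_(i < t.1.1) t.1.2 i *: y (t.2 i).
  by move=> n; have [k [c [s hcs]]] := spanF_range (hz n); exists (k, c, s).
by exists (fun n => (t n).1.1), (fun n => (t n).1.2), (fun n => (t n).2); split=> n; case: (ht n).
Qed.

Lemma spanF_mono (A B : set V) : A `<=` B -> spanF F A `<=` spanF F B.
Proof.
move=> AB v [k [c [s [h ->]]]]; exists k, c, s; split => // i /h[? ?].
by split => //; apply: AB.
Qed.

Hypothesis hF : is_subfield F.

Lemma subfield1 : F 1. Proof. by case: hF => -[]. Qed.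

Lemma subfieldM a b : F a -> F b -> F (a * b).
Proof. by case: hF => -[_ _ _ _ hM] _; apply: hM. Qed.

Lemma spanF_sub (A : set V) : A `<=` spanF F A.
Proof.
move=> v hv; exists 1%N, (fun _ => 1), (fun _ => v); split.
  by move=> i _; split => //; apply: subfield1.
by rewrite big_ord1 scale1r.
Qed.

Lemma spanF0 (A : set V) : spanF F A 0.
Proof. by exists 0%N, (fun _ => 0), (fun _ => 0); rewrite big_ord0. Qed.

Lemma spanFD (A : set V) u v : spanF F A u -> spanF F A v -> spanF F A (u + v).
Proof.
move=> [k1 [c1 [s1 [h1 ->]]]] [k2 [c2 [s2 [h2 ->]]]].
exists (k1 + k2)%N, (fun i => if (i < k1)%N then c1 i else c2 (i - k1)%N),
  (fun i => if (i < k1)%N then s1 i else s2 (i - k1)%N); split.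
  by move=> i hi; case: ifP => hik; [apply: h1 | apply: h2; lia].
rewrite big_split_ord /=; congr (_ + _); apply: eq_bigr => i _.
  by rewrite ltn_ord.
by rewrite ltnNge leq_addr /= addKn.
Qed.

Lemma spanFZ (A : set V) a v : F a -> spanF F A v -> spanF F A (a *: v).
Proof.
move=> ha [k [c [s [h ->]]]]; exists k, (fun i => a * c i), s; split.
  by move=> i /h[? ?]; split => //; apply: subfieldM.
by rewrite scaler_sumr; apply: eq_bigr => i _; rewrite scalerA.
Qed.

Lemma spanF_sum (A : set V) k (c : nat -> R) (w : nat -> V) :
  (forall i, (i < k)%N -> F (c i) /\ spanF F A (w i)) ->
  spanF F A (\sum_(i < k) c i *: w i).
Proof.
elim: k => [|k IH] h; first by rewrite big_ord0; apply: spanF0.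
rewrite big_ord_recr /=; apply: spanFD; first by apply: IH => i hi; apply: h; lia.
by have [? ?] := h k (ltnSn k); apply: spanFZ.
Qed.

Lemma spanF_le (A B : set V) : A `<=` spanF F B -> spanF F A `<=` spanF F B.
Proof. by move=> AB v /(spanF_mono AB) [k [c [s [h ->]]]]; apply: spanF_sum. Qed.

End SpanF.

Section Equivalence.
Variables (R : realType) (V : completeNormedModType R).

Lemma sum_reindex (w : nat -> V) N k (c : nat -> R) (s : nat -> nat) :
  (forall i, (i < k)%N -> (s i < N)%N) ->
  \sum_(i < k) c i *: w (s i) = \sum_(j < N) (\sum_(i < k | s i == j) c i) *: w j.
Proof.
move=> hs; under [RHS]eq_bigr do rewrite scaler_suml big_mkcond /=.
rewrite exchange_big /=; apply: eq_bigr => i _.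
rewrite (bigD1 (Ordinal (hs i (ltn_ord i)))) //= eqxx big1 ?addr0 // => j hj.
by rewrite ifN ?scale0r //; apply: contra hj => /eqP hij; apply/eqP/val_inj.
Qed.

Lemma equivK_nil K : equivK K ([::] : seq V) [::].
Proof. by split => // a; rewrite /= !big_ord0 normr0 !mulr0. Qed.

Lemma equivK_lin K (xs ys : seq V) (M : nat -> nat -> R) L : equivK K xs ys ->
  equivK K (mkseq (fun l => \sum_(j < size xs) M l j *: xs`_j) L)
           (mkseq (fun l => \sum_(j < size ys) M l j *: ys`_j) L).
Proof.
move=> [_ hxy]; split=> [|a]; first by rewrite !size_mkseq.
have regroup (us : seq V) :
    \sum_(l < size (mkseq (fun l => \sum_(j < size us) M l j *: us`_j) L))
      a l *: (mkseq (fun l => \sum_(j < size us) M l j *: us`_j) L)`_l =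
    \sum_(j < size us) (\sum_(l < L) a l * M l j) *: us`_j.
  rewrite size_mkseq.
  under eq_bigr => l _ do rewrite nth_mkseq // scaler_sumr.
  rewrite exchange_big /=; apply: eq_bigr => j _.
  by rewrite scaler_suml; apply: eq_bigr => l _; rewrite scalerA.
by rewrite !regroup; exact: (hxy (fun j => \sum_(l < L) a l * M l j)).
Qed.

Lemma equivK_neq0 K (us vs : seq V) l : equivK K us vs ->
  (l < size us)%N -> vs`_l != 0 -> us`_l != 0.
Proof.
move=> [hsz hK] hl; apply: contra_neq => hu0.
have pick (ws : seq V) : (l < size ws)%N ->
    \sum_(i < size ws) ((i : nat) == l)%:R *: ws`_i = ws`_l.
  move=> hlw; rewrite (bigD1 (Ordinal hlw)) //= eqxx scale1r big1 ?addr0 // => i hi.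
  suff /negbTE -> : (i : nat) != l by rewrite scale0r.
  by apply: contra hi => /eqP hil; apply/eqP/val_inj.
have [_] := hK (fun i => ((i : nat) == l)%:R).
by rewrite !pick -?hsz // hu0 normr0 mulr0 normr_le0 => /eqP.
Qed.

End Equivalence.

Lemma nth_outcome (R : realType) (V : completeNormedModType R) (T : Type)
    (sigma : strategyII V T) ms j :
  (j < size ms)%N -> (outcome sigma ms)`_j = (sigma (take j.+1 ms)).2.
Proof. by move=> hj; rewrite (nth_map 0%N) ?nth_iota ?size_iota. Qed.

Lemma size_outcome (R : realType) (V : completeNormedModType R) (T : Type)
    (sigma : strategyII V T) ms : size (outcome sigma ms) = size ms.
Proof. by rewrite size_map size_iota. Qed.

Lemma legalIIP (R : realType) (V : completeNormedModType R) (F : set R) (e : nat -> V)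
    (X : set V) (T : Type) (sigma : strategyII V T) (a0 : nat * T) ms :
  legalII F e X sigma ms <-> forall j, (j < size ms)%N ->
    let r := sigma (take j.+1 ms) in
    [/\ spanF F [set g | g \in r.1] `<=`
          X `&` spanF F [set e i | i in [set i | ((nth a0 ms j).1 < i)%N]],
        r.2 != 0
      & spanF F [set g | g \in flatten [seq (sigma (take i.+1 ms)).1 | i <- iota 0 j.+1]] r.2].
Proof.
exact: (cons_catP a0 (fun j (p : nat * T) => let r := sigma (take j.+1 ms) in
  [/\ spanF F [set g | g \in r.1] `<=` X `&` spanF F [set e i | i in [set i | (p.1 < i)%N]],
      r.2 != 0
    & spanF F [set g | g \in flatten [seq (sigma (take i.+1 ms)).1 | i <- iota 0 j.+1]] r.2])).
Qed.

Lemma II_has_strategy_void (R : realType) (V : completeNormedModType R) (F : set R)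
    (e : nat -> V) (X : set V) (T : Type) (lt : T -> T -> Prop) (P : seq V -> Prop) :
  ~ inhabited T -> P [::] -> II_has_strategy F e X lt P.
Proof.
move=> nT P0; exists (fun _ => ([::], 0)); split=> // ms [_ [ms1 [p _]]].
by case: nT; constructor; exact: p.2.
Qed.

Lemma is_zero_omega_mul (T : Type) (lt : T -> T -> Prop) xi m :
  is_zero (omega_mul_lt lt) (xi, m) <-> is_zero lt xi /\ m = 0%N.
Proof.
split=> [h0 | [h0 ->] [eta n] [/h0 // | [_ /=]] //].
split=> [eta hlt | ]; first by apply: (h0 (eta, 0%N)); left.
case: m h0 => // m h0; case: (h0 (xi, 0%N)); by right.
Qed.

Section Refinement.
Variables (T : Type) (t0 : T) (d : nat -> nat).
Hypothesis d_gt0 : forall l, (0 < d l)%N.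

(* The move (n, xi) of round l is unfolded into the d l moves
   (n, omega * xi + d l - 1), ..., (n, omega * xi + 0). *)
Definition refine_move (ms : seq (nat * T)) j : nat * (T * nat) :=
  let l := block_of d j in
  let p := nth (0%N, t0) ms l in (p.1, (p.2, (block_start d l.+1 - j.+1)%N)).

Definition refine_play ms := mkseq (refine_move ms) (block_start d (size ms)).

Lemma size_refine_play ms : size (refine_play ms) = block_start d (size ms).
Proof. exact: size_mkseq. Qed.

Lemma take_refine_play ms l : (l <= size ms)%N ->
  take (block_start d l) (refine_play ms) = refine_play (take l ms).
Proof.
move=> hl; rewrite /refine_play size_takel // /mkseq -map_take take_iota.
rewrite (minn_idPl (leq_block_start d hl)).
apply/eq_in_map => j; rewrite mem_iota add0n => /andP[_ hj].
by rewrite /refine_move nth_take //; apply: block_of_lt.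
Qed.

Lemma refine_move_step (lt : T -> T -> Prop) ms i :
  (forall l, (l.+1 < size ms)%N -> lt (nth (0%N, t0) ms l.+1).2 (nth (0%N, t0) ms l).2
                                  /\ ~ is_zero lt (nth (0%N, t0) ms l).2) ->
  (i.+1 < block_start d (size ms))%N ->
  omega_mul_lt lt (refine_move ms i.+1).2 (refine_move ms i).2 /\
  ~ is_zero (omega_mul_lt lt) (refine_move ms i).2.
Proof.
move=> hms hi; rewrite /refine_move; have := block_ofP d_gt0 i.
set l := block_of d i => hl; case: (ltnP i.+1 (block_start d l.+1)) => hnext.
  rewrite (@block_ofE _ d_gt0 i.+1 l); last lia.
  by split=> [|/is_zero_omega_mul [_ ?]]; [right; split => //=; lia | lia].
have hl1 : block_of d i.+1 = l.+1.
  by apply: block_ofE => //; rewrite (block_startS d l.+1); have := d_gt0 l.+1; lia.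
have [hlt hnz] : lt (nth (0%N, t0) ms l.+1).2 (nth (0%N, t0) ms l).2
                 /\ ~ is_zero lt (nth (0%N, t0) ms l).2.
  by apply: hms; rewrite -hl1; apply: block_of_lt.
by rewrite hl1; split=> [|/is_zero_omega_mul []]; [left | ].
Qed.

Lemma refine_play_complete (lt : T -> T -> Prop) ms :
  complete_play lt ms -> complete_play (omega_mul_lt lt) (refine_play ms).
Proof.
move=> [/(cons2_catP (0%N, t0)) hdec /(rconsP (0%N, t0)) [hL hlast]].
split.
  apply/(cons2_catP (0%N, (t0, 0%N))) => i; rewrite size_refine_play => hi.
  by rewrite !nth_mkseq //; [apply: refine_move_step | lia].
apply/(rconsP (0%N, (t0, 0%N))); rewrite size_refine_play.
case/lastP: ms hL hlast hdec => [|ms p] // _; rewrite last_rcons size_rcons => hp _.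
have hgap : (block_start d (size ms) < block_start d (size ms).+1)%N.
  by rewrite block_startS; have := d_gt0 (size ms); lia.
split; first lia.
rewrite -nth_last size_mkseq size_rcons nth_mkseq; last by rewrite size_rcons; lia.
rewrite /refine_move (@block_ofE _ d_gt0 _ (size ms)); last lia.
by rewrite nth_rcons ltnn eqxx prednK ?subnn //; [apply/is_zero_omega_mul | lia].
Qed.

End Refinement.

Section Coarsening.
Variables (R : realType) (V : completeNormedModType R).
Variables (T : Type) (t0 : T) (d : nat -> nat).
Hypothesis d_gt0 : forall l, (0 < d l)%N.
Variables (sigma : strategyII V (T * nat)) (k : nat -> nat) (c : nat -> nat -> R).
Variable s : nat -> nat -> nat.
Hypothesis s_lt : forall l i, (i < k l)%N -> (s l i < block_start d l.+1)%N.

Let answer ms j := sigma (take j.+1 (refine_play t0 d ms)).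

Definition coarse_strategy : strategyII V T := fun ms =>
  let l := (size ms).-1 in
  (flatten [seq (answer ms j).1 | j <- iota (block_start d l) (d l)],
   \sum_(i < k l) c l i *: (answer ms (s l i)).2).

Lemma coarse_strategy_take ms l : (l < size ms)%N ->
  coarse_strategy (take l.+1 ms) =
  (flatten [seq (answer ms j).1 | j <- iota (block_start d l) (d l)],
   \sum_(i < k l) c l i *: (answer ms (s l i)).2).
Proof.
move=> hl; rewrite /coarse_strategy /answer size_takel //= -(take_refine_play t0 d_gt0) //.
congr pair.
  congr flatten; apply/eq_in_map => j; rewrite mem_iota => /andP[_ hj].
  by rewrite -take_min (minn_idPl _) // block_startS; lia.
by apply: eq_bigr => i _; rewrite -take_min (minn_idPl _) //; apply: s_lt.
Qed.

Lemma nth_coarse_outcome ms l : (l < size ms)%N ->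
  (outcome coarse_strategy ms)`_l =
  \sum_(j < block_start d (size ms))
     (\sum_(i < k l | s l i == j) c l i) *: (outcome sigma (refine_play t0 d ms))`_j.
Proof.
move=> hl; have hbs := leq_block_start d hl.
rewrite nth_outcome // coarse_strategy_take //= -sum_reindex => [|i /s_lt]; last lia.
apply: eq_bigr => i _; rewrite nth_outcome // size_refine_play.
by have := s_lt (ltn_ord i); lia.
Qed.

Lemma coarse_equivK K (y z : nat -> V) ms :
  (forall l, z l = \sum_(i < k l) c l i *: y (s l i)) ->
  equivK K (outcome sigma (refine_play t0 d ms)) (mkseq y (block_start d (size ms))) ->
  equivK K (outcome coarse_strategy ms) (mkseq z (size ms)).
Proof.
move=> hz hxy; pose M l j := \sum_(i < k l | s l i == j) c l i.
have /(equivK_lin M (size ms)) := hxy.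
rewrite size_outcome size_refine_play size_mkseq.
congr equivK; apply: (@eq_from_nth _ 0); rewrite ?size_outcome ?size_mkseq // => l hl.
  by rewrite nth_mkseq // nth_coarse_outcome.
rewrite !nth_mkseq // hz (@sum_reindex _ _ y (block_start d (size ms)) (k l) (c l) (s l)).
  by apply: eq_bigr => j _; rewrite nth_mkseq.
by move=> i /s_lt; have := leq_block_start d hl; lia.
Qed.

Lemma coarse_legal (F : set R) (e : nat -> V) (X : set V) ms :
  is_subfield F -> (forall l i, (i < k l)%N -> F (c l i)) ->
  (forall A, A `<=` X -> spanF F A `<=` X) ->
  legalII F e X sigma (refine_play t0 d ms) ->
  (forall l, (l < size ms)%N -> (outcome coarse_strategy ms)`_l != 0) ->
  legalII F e X coarse_strategy ms.
Proof.
move=> hF hc hX /(legalIIP _ _ _ _ (0%N, (t0, 0%N))) hsig hnz.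
apply/(legalIIP _ _ _ _ (0%N, t0)) => l hl; cbv zeta; rewrite coarse_strategy_take //.
have hbs := leq_block_start d hl; rewrite size_refine_play in hsig.
split.
- have hgen : [set g | g \in flatten [seq (answer ms j).1 | j <- iota (block_start d l) (d l)]]
      `<=` X `&` spanF F [set e i | i in [set i | ((nth (0%N, t0) ms l).1 < i)%N]].
    move=> g /flatten_mapP [j]; rewrite mem_iota => /andP[hj1 hj2] hg.
    have hjl : (block_start d l <= j < block_start d l.+1)%N by rewrite block_startS; lia.
    have hjN : (j < block_start d (size ms))%N by lia.
    have [hsub _ _] := hsig j hjN.
    have [hXg] := hsub g (spanF_sub hF hg).
    by rewrite nth_mkseq /refine_move ?(block_ofE d_gt0 hjl); last lia.
  move=> v hv; split.
    by apply: (hX _ (fun g hg => (hgen g hg).1)).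
  by apply: (spanF_le hF (fun g hg => (hgen g hg).2)).
- by have := hnz l hl; rewrite nth_outcome // coarse_strategy_take.
- apply: (@spanF_sum _ _ _ hF _ (k l) (c l) (fun i => (answer ms (s l i)).2)) => i hi.
  split; first exact: hc.
  have hj := s_lt hi.
  have hjN : (s l i < block_start d (size ms))%N by lia.
  have [_ _] := hsig (s l i) hjN.
  apply: spanF_mono => g /flatten_mapP [m]; rewrite mem_iota => /andP[_ hm] hg.
  have hml : (block_of d m < l.+1)%N by apply: (block_of_lt d_gt0); lia.
  apply/flatten_mapP; exists (block_of d m); first by rewrite mem_iota.
  rewrite coarse_strategy_take; last lia.
  apply/flatten_mapP; exists m => //; rewrite mem_iota.
  by have := block_ofP d_gt0 m; rewrite block_startS; lia.
Qed.

End Coarsening.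

Theorem lemma4p5 (R : realType) (V : completeNormedModType R) (e : nat -> V)
    (F : set R)
    (he : schauder_basis e) (hF : is_subfield F) (hFc : countable F)
    (hFn : norm_in_field F e)
    (X : set V) (xb : nat -> V) (hxb : block_seq F e xb) (hX : X = spanF F (range xb))
    (y : nat -> V) (hy : block_seq F e y)
    (T : Type) (ltT : T -> T -> Prop) (halpha : countable_wellorder ltT)
    (K : R) (hK : 1 <= K)
    (hstrat : II_has_strategy F e X (omega_mul_lt ltT)
                (fun xs => equivK K xs (mkseq y (size xs)))) :
  forall z : nat -> V, block_seq F e z -> (forall n, spanF F (range y) (z n)) ->
    II_has_strategy F e X ltT (fun vs => equivK K vs (mkseq z (size vs))).
Proof.
move=> z hz hzy.
case: (pselect (inhabited T)) => [[t0]|nT]; last first.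
  by apply: II_has_strategy_void => //; apply: equivK_nil.
have [k [c [s [hc hzs]]]] := spanF_range_seq hzy.
pose d l := (\max_(i < k l) s l i)%N.+1.
have d_gt0 l : (0 < d l)%N by [].
have s_lt l i : (i < k l)%N -> (s l i < block_start d l.+1)%N.
  move=> hi; have : (s l i < d l)%N.
    by rewrite ltnS; apply: (leq_bigmax (F := fun j : 'I_(k l) => s l j) (Ordinal hi)).
  by rewrite block_startS; lia.
have [sigma [_ hsigma]] := hstrat.
exists (coarse_strategy t0 d sigma k c s).
split=> [/(_ (inhabits t0)) // | ms hms].
have [hleg] := hsigma _ (refine_play_complete t0 d_gt0 hms).
rewrite size_outcome size_refine_play => /(coarse_equivK d_gt0 s_lt hzs) hequiv.
split; last by rewrite size_outcome.
apply: (coarse_legal d_gt0 s_lt hF hc _ hleg).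
  by move=> A; rewrite hX; apply: spanF_le.
move=> l hl; apply: (equivK_neq0 hequiv); first by rewrite size_outcome.
by rewrite nth_mkseq //; case: (hz l).
Qed.
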